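(* Let $G$ be a weakly-reversible chemical reaction network in $s$ species, let $\mathbf{k}$ be a field of characteristic zero, and let $(\mathcal{E}_G)\subseteq \mathbf{k}[x_1,\dots,x_s]$ be the ideal generated by its associated event-system. Let $M$ and $N$ be distinct monic monomials in $x_1,\dots,x_s$. Then $M-N\in(\mathcal{E}_G)$ if and only if $M$ and $N$ are path-connected in the event-graph $\overline{G}$.
   Context: A chemical reaction network (CRN) consists of positive integers $s$ (species) and $n$ (complexes), a finite directed graph $G$ with vertex set $\{1,\dots,n\}$ and edge set $E(G)\subseteq\{1,\dots,n\}^2$, and an injective labeling of vertex $i$ by a monic monomial $\psi_i=\prod_{j=1}^s x_j^{y_{ij}}$ with $y_{ij}\in\mathbb{Z}_{\ge 0}$. $G$ is weakly-reversible iff each connected component of $G$ is strongly connected. The associated event-system $\mathcal{E}_G$ is the set of binomials $\psi_i-\psi_j$, one for each pair $\{i,j\}$ with $(i,j)\in E(G)$ or $(j,i)\in E(G)$ (the sign being fixed by some total order on monomials; it is irrelevant for the generated ideal). The event-graph $\overline{G}$ is the directed graph whose vertex set is the set of all monic monomials in $x_1,\dots,x_s$ (including $1$), with an edge $(N\psi_i, N\psi_j)$ for every $(i,j)\in E(G)$ and every monic monomial $N$. *)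

From HB Require Import structures.
From mathcomp Require Import all_boot all_order all_algebra.
From mathcomp Require Import mpoly.
From Stdlib Require Import Relations.

Set Implicit Arguments.
Unset Strict Implicit.
Unset Printing Implicit Defensive.

Import GRing.Theory.
Local Open Scope ring_scope.

Definition in_ideal_gen (R : comNzRingType) (gens : seq R) (p : R) : Prop :=
  exists cs : seq R, size cs = size gens /\
    p = \sum_(i < size gens) cs`_i * gens`_i.

Definition weakly_reversible (n : nat) (E : rel 'I_n) : Prop :=
  forall i j : 'I_n, connect (fun a b => E a b || E b a) i j -> connect E i j.

(* Event-system E_G : the binomials psi_i - psi_j, for every edge (i,j) of G,
   where psi_i = 'X_[y i].  (Listing both orientations when both (i,j) and
   (j,i) are edges does not change the generated ideal.) *)
Definition event_system (K : fieldType) (s n : nat) (E : rel 'I_n)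
    (y : 'I_n -> 'X_{1..s}) : seq {mpoly K[s]} :=
  [seq 'X_[y p.1] - 'X_[y p.2] | p <- enum [pred p : 'I_n * 'I_n | E p.1 p.2]].

(* Monic monomials are identified with their
   exponent vectors 'X_{1..s}; multiplication of monomials is addition. *)
Definition event_edge (s n : nat) (E : rel 'I_n) (y : 'I_n -> 'X_{1..s})
    (a b : 'X_{1..s}) : Prop :=
  exists (m : 'X_{1..s}) (i j : 'I_n),
    E i j /\ a = (m + y i)%MM /\ b = (m + y j)%MM.

Definition event_connected (s n : nat) (E : rel 'I_n) (y : 'I_n -> 'X_{1..s})
    (a b : 'X_{1..s}) : Prop :=
  clos_refl_trans _ (event_edge E y) a b.

(* An element of the event ideal is a combination c_e * (N psi_i - N psi_j) of
   event-graph edges.  Weighting the coefficients of a polynomial by the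
   indicator of the set of monomials reachable from M gives a linear form;
   weak reversibility makes reachability symmetric, so this indicator takes the
   same value at both ends of every event-graph edge and the form kills the
   ideal.  Applied to M - N it gives 1 - [N reachable], hence N is reachable.
   Conversely a path M = m_0 -> ... -> m_k = N telescopes M - N into a sum of
   multiples of generators. *)

From HB Require Import structures.
From mathcomp Require Import all_boot all_order all_algebra.
From mathcomp Require Import mpoly.
From Stdlib Require Import Relations ClassicalEpsilon.

Set Implicit Arguments.
Unset Strict Implicit.
Unset Printing Implicit Defensive.
Import GRing.Theory.

Local Open Scope ring_scope.

Section IdealGen.
Variables (R : comNzRingType) (gens : seq R).

Lemma in_ideal_genP p :
  in_ideal_gen gens p <->
  exists c : 'I_(size gens) -> R, p = \sum_i c i * gens`_i.
Proof.
split=> [[cs [_ ->]] | [c ->]]; first by exists (fun i => cs`_i).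
exists (mkseq (fun k => if insub k is Some i then c i else 0) (size gens)).
rewrite size_mkseq; split=> //; apply: eq_bigr => i _.
by rewrite nth_mkseq // valK.
Qed.

Lemma in_ideal_gen0 : in_ideal_gen gens 0.
Proof.
by apply/in_ideal_genP; exists (fun _ => 0); rewrite big1 // => i; rewrite mul0r.
Qed.

Lemma in_ideal_genD p q :
  in_ideal_gen gens p -> in_ideal_gen gens q -> in_ideal_gen gens (p + q).
Proof.
move=> /in_ideal_genP[c ->] /in_ideal_genP[d ->]; apply/in_ideal_genP.
by exists (fun i => c i + d i); rewrite -big_split; apply: eq_bigr => i _; rewrite mulrDl.
Qed.

Lemma in_ideal_gen_mull c g : g \in gens -> in_ideal_gen gens (c * g).
Proof.
rewrite -index_mem => g_in; apply/in_ideal_genP.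
pose k : 'I_(size gens) := Ordinal g_in.
exists (fun i => if i == k then c else 0).
rewrite (bigD1 k) //= eqxx nth_index -?index_mem // big1 ?addr0 //.
by move=> i /negbTE ->; rewrite mul0r.
Qed.

Lemma in_ideal_gen_additive_eq0 (V : zmodType) (f : {additive R -> V}) p :
  (forall c g, g \in gens -> f (c * g) = 0) -> in_ideal_gen gens p -> f p = 0.
Proof.
move=> f_gens /in_ideal_genP[c ->]; rewrite raddf_sum big1 // => i _.
exact/f_gens/mem_nth.
Qed.

End IdealGen.

Section CoefficientWeight.
Variables (R : comNzRingType) (s : nat) (b : 'X_{1..s} -> R).

Definition mweight (p : {mpoly R[s]}) : R := \sum_(m <- msupp p) p@_m * b m.

Lemma mweightE (S : seq 'X_{1..s}) p :
  uniq S -> {subset msupp p <= S} -> mweight p = \sum_(m <- S) p@_m * b m.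
Proof.
move=> uS supp_S; rewrite (bigID (mem (msupp p))) /= [X in _ + X]big1 ?addr0.
  rewrite -big_filter; apply: perm_big.
  apply: uniq_perm; rewrite ?filter_uniq // => m.
  rewrite mem_filter; apply/idP/andP=> [m_supp | [] //].
  by split; rewrite ?supp_S.
by move=> m /memN_msupp_eq0 ->; rewrite mul0r.
Qed.

Lemma mweight_is_zmod_morphism : zmod_morphism mweight.
Proof.
move=> p q; set S := undup (msupp p ++ msupp q).
have supp_pq : {subset msupp (p - q) <= S}.
  move=> m /msuppD_le; rewrite mem_undup !mem_cat.
  by rewrite (perm_mem (msuppN q)).
rewrite !(@mweightE S) ?undup_uniq //; last 2 first.
- by move=> m m_supp; rewrite mem_undup mem_cat m_supp orbT.
- by move=> m m_supp; rewrite mem_undup mem_cat m_supp.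
by rewrite -sumrB; apply: eq_bigr => m _; rewrite mcoeffB mulrBl.
Qed.

HB.instance Definition _ :=
  GRing.isZmodMorphism.Build {mpoly R[s]} R mweight mweight_is_zmod_morphism.

Lemma mweightZX k m : mweight (k *: 'X_[m]) = k * b m.
Proof.
rewrite (@mweightE [:: m]) // ?big_seq1 ?mcoeffZ ?mcoeffX ?eqxx ?mulr1 //.
by move=> x /msuppZ_le; rewrite msuppX.
Qed.

Lemma mweightX m : mweight 'X_[m] = b m.
Proof. by have := mweightZX 1 m; rewrite scale1r mul1r. Qed.

Lemma mweightMX c a :
  mweight (c * 'X_[a]) = \sum_(m <- msupp c) c@_m * b (m + a)%MM.
Proof.
rewrite {1}(mpolyE c) mulr_suml raddf_sum; apply: eq_bigr => m _.
by rewrite /= -scalerAl -mpolyXD mweightZX.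
Qed.

End CoefficientWeight.

Section EventGraph.
Variables (s n : nat) (E : rel 'I_n) (y : 'I_n -> 'X_{1..s}).
Local Notation connected := (event_connected E y).

Lemma event_connected_edge m i j :
  E i j -> connected (m + y i)%MM (m + y j)%MM.
Proof. by move=> Eij; apply: rt_step; exists m, i, j. Qed.

Lemma event_connected_connect m i j :
  connect E i j -> connected (m + y i)%MM (m + y j)%MM.
Proof.
move/connectP=> [p pth ->] {j}; elim: p i pth => [|k p IHp] i /=.
  by move=> _; apply: rt_refl.
by case/andP=> Eik /IHp; apply: rt_trans (event_connected_edge m Eik).
Qed.

Lemma event_connected_sym a c :
  weakly_reversible E -> connected a c -> connected c a.
Proof.
move=> wrE; elim=> {a c} [a c [m [i [j [Eij [-> ->]]]]] | x | x z w _ Hzx _ Hwz].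
- by apply/event_connected_connect/wrE/connect1; rewrite Eij orbT.
- exact: rt_refl.
- exact: rt_trans Hwz Hzx.
Qed.

End EventGraph.

Section EventIdeal.
Variables (K : fieldType) (s n : nat) (E : rel 'I_n) (y : 'I_n -> 'X_{1..s}).
Local Notation connected := (event_connected E y).
Local Notation in_event_ideal := (in_ideal_gen (event_system K E y)).

Lemma event_connected_in_ideal a c :
  connected a c -> in_event_ideal ('X_[a] - 'X_[c]).
Proof.
elim=> {a c} [a c [m [i [j [Eij [-> ->]]]]] | a | a b c _ Iab _ Ibc].
- rewrite !mpolyXD -mulrBr; apply: in_ideal_gen_mull.
  by apply/mapP; exists (i, j); rewrite ?mem_enum.
- by rewrite subrr; apply: in_ideal_gen0.
- by rewrite -(subrK 'X_[b] 'X_[a]) -addrA; apply: in_ideal_genD.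
Qed.

Lemma mweight_event_ideal_eq0 (b : 'X_{1..s} -> K) p :
  (forall m i j, E i j -> b (m + y i)%MM = b (m + y j)%MM) ->
  in_event_ideal p -> mweight b p = 0.
Proof.
move=> b_edge; apply: in_ideal_gen_additive_eq0 => c g /mapP[[i j]].
rewrite mem_enum => Eij ->; rewrite mulrBr raddfB /= !mweightMX -sumrB.
by rewrite big1 // => m _; rewrite (b_edge _ _ _ Eij) subrr.
Qed.

Lemma in_ideal_event_connected M N :
  weakly_reversible E -> in_event_ideal ('X_[M] - 'X_[N]) -> connected M N.
Proof.
move=> wrE.
pose reach m : K := if excluded_middle_informative (connected M m) then 1 else 0.
have reach_edge m i j : E i j -> reach (m + y i)%MM = reach (m + y j)%MM.
  move=> Eij; have Eyij := event_connected_edge y m Eij.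
  rewrite /reach; do 2 case: excluded_middle_informative => //.
  - by move=> nMj Mi; case: nMj; apply: rt_trans Mi Eyij.
  - by move=> Mj nMi; case: nMi; apply: rt_trans Mj (event_connected_sym wrE Eyij).
move=> /(mweight_event_ideal_eq0 reach_edge); rewrite raddfB /= !mweightX /reach.
case: excluded_middle_informative => [reachM | []]; last exact: rt_refl.
case: excluded_middle_informative => // nMN /eqP.
by rewrite subr0 oner_eq0.
Qed.

End EventIdeal.

Theorem lemma3p1 (K : fieldType) (s n : nat) (E : rel 'I_n)
    (y : 'I_n -> 'X_{1..s}) (M N : 'X_{1..s}) :
  (0 < s)%N -> (0 < n)%N ->
  injective y ->
  weakly_reversible E ->
  [pchar K] =i pred0 ->
  M != N ->
  (in_ideal_gen (event_system K E y) ('X_[M] - 'X_[N] : {mpoly K[s]})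
   <-> event_connected E y M N).
Proof.
move=> _ _ _ wrE _ _; split; first exact: in_ideal_event_connected.
exact: event_connected_in_ideal.
Qed.
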